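(* Let $X$ be a nonempty set and $f,g:X\to\mathbb{R}$. Then there exists $\lambda\in[0,1]$ such that \[ 0\leq \lambda f(x)+(1-\lambda)g(x)\qquad (x\in X) \] if and only if \[ 0\leq \max\big(t f(x)+(1-t)f(y),\ t g(x)+(1-t)g(y)\big)\qquad (x,y\in X,\ t\in[0,1]). \] *)

From Stdlib Require Export Reals.

(** Each point [x] constrains the weight [lam] to an interval of [[0, 1]]:
    the set where [lam * f x + (1 - lam) * g x >= 0].  The hypothesis on pairs
    says that any two of these intervals meet (a two-point minimax statement
    in the plane), and pairwise intersecting intervals have a common point,
    namely the supremum of their left endpoints. *)

From Stdlib Require Import Reals Lra.
Open Scope R_scope.

Lemma pairwise_intervals_common_point (X : Type) (lo hi : X -> R) :
  inhabited X -> (forall x y, lo x <= hi y) ->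
  exists s, forall x, lo x <= s <= hi x.
Proof.
  intros [x0] Hlohi.
  set (E := fun r => exists x, r = lo x).
  assert (HE : bound E) by (exists (hi x0); intros r [x ->]; apply Hlohi).
  destruct (completeness E HE (ex_intro _ (lo x0) (ex_intro _ x0 eq_refl)))
    as [s [Hub Hlub]].
  exists s; intro x; split.
  - apply Hub; now exists x.
  - apply Hlub; intros r [y ->]; apply Hlohi.
Qed.

Lemma Rmax_nonneg_of_convex_comb (lam u v : R) :
  0 <= lam <= 1 -> 0 <= lam * u + (1 - lam) * v -> 0 <= Rmax u v.
Proof.
  intros Hlam Hcomb.
  destruct (Rle_or_lt 0 u) as [Hu|Hu]; [apply Rmax_Rle; now left|].
  destruct (Rle_or_lt 0 v) as [Hv|Hv]; [apply Rmax_Rle; now right|].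
  nra.
Qed.

(* The two coordinates of [t (a, b) + (1 - t) (c, d)] are negative for any
   [t] strictly between [d / (d - b)] and [- c / (a - c)], which are in this
   order exactly when [a * d < b * c]. *)
Lemma segment_meets_negative_quadrant (a b c d : R) :
  0 <= a -> b < 0 -> c < 0 -> 0 <= d -> a * d < b * c ->
  exists t, 0 <= t <= 1 /\ t * a + (1 - t) * c < 0 /\ t * b + (1 - t) * d < 0.
Proof.
  intros Ha Hb Hc Hd Had.
  set (p := d / (d - b)); set (q := - c / (a - c)).
  assert (Ep : p * (d - b) = d) by (unfold p; field; lra).
  assert (Eq : q * (a - c) = - c) by (unfold q; field; lra).
  assert (Hpq : p < q).
  { apply (Rmult_lt_reg_r ((d - b) * (a - c))); [nra|].
    replace (p * ((d - b) * (a - c))) with (d * (a - c))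
      by (rewrite <- Rmult_assoc, Ep; ring).
    replace (q * ((d - b) * (a - c))) with (- c * (d - b))
      by (rewrite (Rmult_comm (d - b)), <- Rmult_assoc, Eq; ring).
    lra. }
  exists ((p + q) / 2); repeat split; nra.
Qed.

(* For [0 <= a] or [0 <= b], the [lam] in [[0, 1]] with
   [0 <= lam * a + (1 - lam) * b] form the interval
   [[weight_lo a b, weight_hi a b]]; [b / (b - a)] is the root of
   [lam |-> lam * a + (1 - lam) * b]. *)
Definition weight_lo (a b : R) : R := if Rle_dec 0 b then 0 else b / (b - a).

Definition weight_hi (a b : R) : R := if Rle_dec 0 a then 1 else b / (b - a).

Lemma weight_interval_admissible (a b lam : R) :
  0 <= a \/ 0 <= b -> weight_lo a b <= lam <= weight_hi a b ->
  0 <= lam <= 1 /\ 0 <= lam * a + (1 - lam) * b.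
Proof.
  unfold weight_lo, weight_hi.
  destruct (Rle_dec 0 b) as [Hb|Hb]; destruct (Rle_dec 0 a) as [Ha|Ha];
    intros Hab Hlam.
  - split; nra.
  - assert (E : b / (b - a) * (b - a) = b) by (field; lra).
    split; nra.
  - assert (E : b / (b - a) * (b - a) = b) by (field; lra).
    split; nra.
  - lra.
Qed.

Lemma weight_lo_le1 (a b : R) : 0 <= a \/ 0 <= b -> weight_lo a b <= 1.
Proof.
  unfold weight_lo; destruct (Rle_dec 0 b) as [Hb|Hb]; intros Hab; [lra|].
  assert (E : b / (b - a) * (b - a) = b) by (field; lra).
  nra.
Qed.

Lemma weight_hi_ge0 (a b : R) : 0 <= a \/ 0 <= b -> 0 <= weight_hi a b.
Proof.
  unfold weight_hi; destruct (Rle_dec 0 a) as [Ha|Ha]; intros Hab; [lra|].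
  assert (E : b / (b - a) * (b - a) = b) by (field; lra).
  nra.
Qed.

Lemma weight_lo_le_hi (a b c d : R) :
  0 <= a \/ 0 <= b -> 0 <= c \/ 0 <= d ->
  (forall t, 0 <= t <= 1 ->
     0 <= Rmax (t * a + (1 - t) * c) (t * b + (1 - t) * d)) ->
  weight_lo a b <= weight_hi c d.
Proof.
  intros Hab Hcd Hseg.
  pose proof (weight_lo_le1 a b Hab) as Hlo1.
  pose proof (weight_hi_ge0 c d Hcd) as Hhi0.
  unfold weight_lo, weight_hi in *.
  destruct (Rle_dec 0 b) as [Hb|Hb]; destruct (Rle_dec 0 c) as [Hc|Hc]; try lra.
  assert (Ha : 0 <= a) by lra; assert (Hd : 0 <= d) by lra.
  apply Rnot_le_lt in Hb, Hc.
  assert (Hbc : b * c <= a * d).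
  { destruct (Rle_or_lt (b * c) (a * d)) as [|Hlt]; [assumption|exfalso].
    destruct (segment_meets_negative_quadrant a b c d Ha Hb Hc Hd Hlt)
      as [t [Ht [H1 H2]]].
    pose proof (Hseg t Ht); pose proof (Rmax_lub_lt _ _ _ H1 H2); lra. }
  assert (El : b / (b - a) * (b - a) = b) by (field; lra).
  assert (Eu : d / (d - c) * (d - c) = d) by (field; lra).
  apply (Rmult_le_reg_r ((a - b) * (d - c))); nra.
Qed.

Theorem corollary2p3 (X : Type) (HX : inhabited X) (f g : X -> R) :
  (exists lam : R, 0 <= lam <= 1 /\
     forall x : X, 0 <= lam * f x + (1 - lam) * g x)
  <->
  (forall (x y : X) (t : R), 0 <= t <= 1 ->
     0 <= Rmax (t * f x + (1 - t) * f y) (t * g x + (1 - t) * g y)).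
Proof.
  split.
  - intros [lam [Hlam Hpos]] x y t Ht.
    apply (Rmax_nonneg_of_convex_comb lam); [exact Hlam|].
    pose proof (Hpos x); pose proof (Hpos y).
    replace (lam * (t * f x + (1 - t) * f y) + (1 - lam) * (t * g x + (1 - t) * g y))
      with (t * (lam * f x + (1 - lam) * g x) + (1 - t) * (lam * f y + (1 - lam) * g y))
      by ring.
    nra.
  - intros Hseg.
    assert (Hpt : forall x, 0 <= f x \/ 0 <= g x).
    { intro x; apply Rmax_Rle.
      replace (f x) with (1 * f x + (1 - 1) * f x) by ring.
      replace (g x) with (1 * g x + (1 - 1) * g x) by ring.
      apply Hseg; lra. }
    destruct (pairwise_intervals_common_point X
                (fun x => weight_lo (f x) (g x)) (fun x => weight_hi (f x) (g x)) HX)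
      as [s Hs].
    { intros x y; apply weight_lo_le_hi; auto. }
    destruct HX as [x0].
    exists s; split.
    + exact (proj1 (weight_interval_admissible _ _ _ (Hpt x0) (Hs x0))).
    + intro x; exact (proj2 (weight_interval_admissible _ _ _ (Hpt x) (Hs x))).
Qed.
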